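(* As $n\to\infty$, $$\log(n)\sum_{(a,b)\in\mathcal{A}_n}|r_n(a,b)|\longrightarrow 0.$$
   Context: $\mathcal{A}_n=\{(a,b)\in\mathbb{N}^2: a\ge b\ge1,\ a+b\le n+1\}$, $x^{\underline{2}}=x(x-1)$, and $r_n(a,b)=\dfrac{(-1)^{n+a-b}(n+1)(2a-2b+1)(a-1)!(2b-2)!(n-a-b+2)!}{2^{n-a+b-1}\,n!\,(b-1)!\,(n+a-b+2)^{\underline{2}}\,(n-a+b+1)^{\underline{2}}}$. *)

From Stdlib Require Import Reals List Arith.
Import ListNotations.
Open Scope R_scope.

Definition fall2 (x : R) : R := x * (x - 1).

(* A_n = {(a,b) in N^2 : a >= b >= 1, a + b <= n+1}, as an explicit list
   (each pair appears exactly once). *)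
Definition A_set (n : nat) : list (nat * nat) :=
  flat_map (fun a => map (fun b => (a, b))
                         (filter (fun b => Nat.leb (a + b) (n + 1)) (seq 1 a)))
           (seq 1 n).

(* r_n(a,b); for (a,b) in A_n all nat subtractions below are exact. *)
Definition r_n (n a b : nat) : R :=
  (-1) ^ (n + a - b) * INR (n + 1) * INR (2 * a - 2 * b + 1)
  * INR (fact (a - 1)) * INR (fact (2 * b - 2)) * INR (fact (n + 2 - a - b))
  / (2 ^ (n + b - a - 1) * INR (fact n) * INR (fact (b - 1))
     * fall2 (INR (n + a - b + 2)) * fall2 (INR (n + b + 1 - a))).

Definition sum_abs_r (n : nat) : R :=
  fold_right (fun p acc => Rabs (r_n n (fst p) (snd p)) + acc) 0 (A_set n).

(* With (a, b) = (q + k + 1, q + 1) and n = 2q + k + r + 1, the estimates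
   x! y! <= (x + y - 1)! and (2q)! <= 4^q (q!)^2 give, for m = n + b - a,
   |r_n(a,b)| <= 4 / (n m (m+1)) when b = 1 and <= 4 / (n (n+1) m (m+1)) when b >= 2.
   These majorants telescope, in b for fixed a and then in a, so the whole sum is at
   most 8 / (n+1); it remains that log(n) / n -> 0. *)

From Stdlib Require Import Reals List Arith Lia Lra.
From Coquelicot Require Import Coquelicot.
Open Scope nat_scope.

Lemma fact_S_mul_fact_S_le (x y : nat) : fact (S x) * fact (S y) <= fact (S (x + y)).
Proof.
  induction x as [|x IH]; cbn [Nat.add].
  - change (fact 1) with 1; lia.
  - change (fact (S (S x))) with (S (S x) * fact (S x)).
    change (fact (S (S (x + y)))) with (S (S (x + y)) * fact (S (x + y))).
    nia.
Qed.

Lemma fact_double_le (q : nat) : fact (2 * q) <= 2 ^ (2 * q) * fact q * fact q.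
Proof.
  induction q as [|q IH]; [simpl; lia|].
  replace (2 * S q) with (S (S (2 * q))) by lia.
  change (fact (S (S (2 * q)))) with (S (S (2 * q)) * (S (2 * q) * fact (2 * q))).
  change (fact (S q)) with (S q * fact q).
  change (2 ^ S (S (2 * q))) with (2 * (2 * 2 ^ (2 * q))).
  nia.
Qed.

(* For (a, b, n) = (q + k + 1, q + 1, 2q + k + r + 1) every subtraction in r_n(a,b) is exact
   and |r_n(a,b)| = r_num / r_den. *)
Definition r_num (q k r : nat) : nat :=
  (2 * q + k + r + 2) * (2 * k + 1) * fact (q + k) * fact (2 * q) * fact (S r).

Definition r_den (q k r : nat) : nat :=
  2 ^ (2 * q + r) * fact (2 * q + k + r + 1) * fact q
  * ((2 * q + 2 * k + r + 3) * (2 * q + 2 * k + r + 2)) * ((2 * q + r + 2) * (2 * q + r + 1)).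

(* 1 / (m (m + 1)) with m = n + b - a telescopes in b; for b = 1 it also telescopes in a. *)
Definition majorant_den (n a b : nat) : nat :=
  n * ((n + b - a) * S (n + b - a)) * (if b =? 1 then 1 else S n).

Lemma fact_bound_b_eq1 (k r : nat) :
  fact k * fact (S r) * (k + r + 1) <= 2 ^ S r * fact (k + r + 1).
Proof.
  destruct k as [|k].
  - pose proof (Nat.pow_gt_lin_r 2 (S r)). change (fact 0) with 1.
    replace (0 + r + 1) with (S r) by lia. nia.
  - pose proof (fact_S_mul_fact_S_le k r).
    assert (1 <= 2 ^ S r) by (apply Nat.le_succ_l, Nat.neq_0_lt_0, Nat.pow_nonzero; lia).
    replace (S k + r + 1) with (S (S (k + r))) by lia.
    change (fact (S (S (k + r)))) with (S (S (k + r)) * fact (S (k + r))).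
    apply Nat.le_trans with (fact (S (k + r)) * S (S (k + r))); [apply Nat.mul_le_mono_r; assumption|].
    nia.
Qed.

Lemma fact_bound_b_ge2 (q k r : nat) :
  fact (S q + k) * fact (2 * S q) * fact (S r) * ((2 * S q + k + r + 1) * (2 * S q + k + r + 2))
  <= 2 * 2 ^ (2 * S q) * fact (S q) * fact (2 * S q + k + r + 1).
Proof.
  pose proof (fact_double_le (S q)) as Hdouble.
  assert (Hmerge : fact (S q) * (fact (S q + k) * fact (S r)) <= fact (S (q + (q + k + r)))).
  { eapply Nat.le_trans; [apply Nat.mul_le_mono_l, fact_S_mul_fact_S_le|].
    apply fact_S_mul_fact_S_le. }
  replace (2 * S q + k + r + 2) with (S (S (S (S (q + (q + k + r)))))) by lia.
  replace (2 * S q + k + r + 1) with (S (S (S (q + (q + k + r))))) by lia.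
  set (N := q + (q + k + r)) in *.
  change (fact (S (S (S N)))) with (S (S (S N)) * (S (S N) * fact (S N))).
  set (P := 2 ^ (2 * S q)) in *. set (Fq := fact (S q)) in *.
  set (A := fact (S q + k)) in *. set (B := fact (S r)) in *. set (D := fact (2 * S q)) in *.
  set (G := fact (S N)) in *. clearbody N P Fq A B D G.
  set (n := S (S (S N))).
  apply Nat.le_trans with (P * Fq * (Fq * (A * B)) * (n * S n)).
  { replace (P * Fq * (Fq * (A * B))) with (A * (P * Fq * Fq) * B) by ring.
    apply Nat.mul_le_mono_r, Nat.mul_le_mono_r, Nat.mul_le_mono_l, Hdouble. }
  apply Nat.le_trans with (P * Fq * G * (n * S n)).
  { apply Nat.mul_le_mono_r, Nat.mul_le_mono_l, Hmerge. }
  unfold n. nia.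
Qed.

Lemma r_num_mul_le (q k r : nat) :
  r_num q k r * majorant_den (2 * q + k + r + 1) (q + k + 1) (q + 1) <= 4 * r_den q k r.
Proof.
  unfold r_num, r_den, majorant_den.
  replace (2 * q + k + r + 1 + (q + 1) - (q + k + 1)) with (2 * q + r + 1) by lia.
  assert (Hlin : (2 * q + k + r + 2) * (2 * k + 1)
                 <= 2 * ((2 * q + 2 * k + r + 3) * (2 * q + 2 * k + r + 2))) by nia.
  destruct q as [|q].
  - change (0 + 1 =? 1) with true.
    pose proof (Nat.mul_le_mono _ _ _ _ Hlin (fact_bound_b_eq1 k r)) as H.
    apply (Nat.mul_le_mono_r _ _ ((r + 1) * (r + 2))) in H.
    rewrite Nat.pow_succ_r' in H.
    eapply Nat.le_trans; [apply Nat.eq_le_incl | eapply Nat.le_trans; [exact H | apply Nat.eq_le_incl]];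
      simpl; ring.
  - rewrite (proj2 (Nat.eqb_neq (S q + 1) 1)) by lia.
    pose proof (Nat.mul_le_mono _ _ _ _ Hlin (fact_bound_b_ge2 q k r)) as H.
    apply (Nat.mul_le_mono_r _ _ ((2 * S q + r + 1) * (2 * S q + r + 2))) in H.
    assert (H2r : 2 ^ r <> 0) by (apply Nat.pow_nonzero; lia).
    rewrite Nat.pow_add_r.
    eapply Nat.le_trans; [apply Nat.eq_le_incl | eapply Nat.le_trans; [exact H |]]; [ring|].
    eapply Nat.le_trans; [apply (Nat.le_mul_r _ _ H2r) | apply Nat.eq_le_incl; ring].
Qed.

Open Scope R_scope.

Lemma fall2_INR_S (m : nat) : fall2 (INR (S m)) = INR (S m) * INR m.
Proof. unfold fall2. rewrite S_INR. ring. Qed.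

Lemma r_den_pos (q k r : nat) : (0 < r_den q k r)%nat.
Proof.
  unfold r_den.
  pose proof (Nat.pow_nonzero 2 (2 * q + r)).
  repeat apply Nat.mul_pos_pos; try apply lt_O_fact; lia.
Qed.

Lemma abs_r_n_param (q k r : nat) :
  Rabs (r_n (2 * q + k + r + 1) (q + k + 1) (q + 1)) = INR (r_num q k r) / INR (r_den q k r).
Proof.
  assert (Hsign : r_n (2 * q + k + r + 1) (q + k + 1) (q + 1)
                  = (-1) ^ (2 * q + k + r + 1 + (q + k + 1) - (q + 1))
                    * (INR (r_num q k r) / INR (r_den q k r))).
  { unfold r_n, r_num, r_den.
    replace (2 * (q + k + 1) - 2 * (q + 1) + 1)%nat with (2 * k + 1)%nat by lia.
    replace (q + k + 1 - 1)%nat with (q + k)%nat by lia.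
    replace (2 * (q + 1) - 2)%nat with (2 * q)%nat by lia.
    replace (2 * q + k + r + 1 + 2 - (q + k + 1) - (q + 1))%nat with (S r) by lia.
    replace (2 * q + k + r + 1 + (q + 1) - (q + k + 1) - 1)%nat with (2 * q + r)%nat by lia.
    replace (q + 1 - 1)%nat with q by lia.
    replace (2 * q + k + r + 1 + (q + k + 1) - (q + 1) + 2)%nat
      with (S (2 * q + 2 * k + r + 2)) by lia.
    replace (2 * q + k + r + 1 + (q + 1) + 1 - (q + k + 1))%nat with (S (2 * q + r + 1)) by lia.
    rewrite !fall2_INR_S.
    replace (2 * q + k + r + 1 + 1)%nat with (2 * q + k + r + 2)%nat by lia.
    replace (S (2 * q + 2 * k + r + 2)) with (2 * q + 2 * k + r + 3)%nat by lia.
    replace (S (2 * q + r + 1)) with (2 * q + r + 2)%nat by lia.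
    rewrite !mult_INR, pow_INR.
    replace (INR 2) with 2 by reflexivity.
    field.
    repeat split; try apply INR_fact_neq_0; try apply pow_nonzero; try lra;
      apply not_0_INR; lia. }
  rewrite Hsign, Rabs_mult, pow_1_abs, Rmult_1_l, Rabs_pos_eq; [reflexivity|].
  apply Rle_mult_inv_pos; [apply pos_INR | apply lt_0_INR, r_den_pos].
Qed.

Definition majorant (n a b : nat) : R := 4 / INR (majorant_den n a b).

Lemma majorant_den_pos (n a b : nat) :
  (1 <= n)%nat -> (a <= n)%nat -> (1 <= b)%nat -> (0 < majorant_den n a b)%nat.
Proof.
  intros. unfold majorant_den.
  destruct (b =? 1); repeat apply Nat.mul_pos_pos; lia.
Qed.

Lemma majorant_pos (n a b : nat) :
  (1 <= n)%nat -> (a <= n)%nat -> (1 <= b)%nat -> 0 < majorant n a b.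
Proof.
  intros. apply Rdiv_lt_0_compat; [lra|]. apply lt_0_INR, majorant_den_pos; assumption.
Qed.

Lemma INR_div_le_INR_div (x y u v : nat) :
  (0 < y)%nat -> (0 < v)%nat -> (x * v <= u * y)%nat -> INR x / INR y <= INR u / INR v.
Proof.
  intros Hy Hv Hle.
  apply lt_0_INR in Hy. apply lt_0_INR in Hv. apply le_INR in Hle. rewrite !mult_INR in Hle.
  apply (Rmult_le_reg_r (INR y * INR v)); [nra|].
  replace (INR x / INR y * (INR y * INR v)) with (INR x * INR v) by (field; lra).
  replace (INR u / INR v * (INR y * INR v)) with (INR u * INR y) by (field; lra).
  exact Hle.
Qed.

Lemma in_A_set_bounds (n a b : nat) :
  In (a, b) (A_set n) -> (1 <= b <= a /\ a + b <= n + 1)%nat.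
Proof.
  unfold A_set. rewrite in_flat_map. intros [a' [Ha' Hab]].
  apply in_map_iff in Hab as [b' [Heq Hb']]. injection Heq as <- <-.
  apply filter_In in Hb' as [Hb' Hsum].
  apply in_seq in Ha'. apply in_seq in Hb'. apply Nat.leb_le in Hsum. lia.
Qed.

Lemma abs_r_n_le_majorant (n a b : nat) :
  In (a, b) (A_set n) -> Rabs (r_n n a b) <= majorant n a b.
Proof.
  intros Hin. apply in_A_set_bounds in Hin.
  assert (exists q k r, n = (2 * q + k + r + 1)%nat /\ a = (q + k + 1)%nat /\ b = (q + 1)%nat)
    as (q & k & r & -> & -> & ->) by (exists (b - 1)%nat, (a - b)%nat, (n + 1 - a - b)%nat; lia).
  rewrite abs_r_n_param. unfold majorant. replace 4 with (INR 4) by (simpl; ring).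
  apply INR_div_le_INR_div; [apply r_den_pos | apply majorant_den_pos; lia | apply r_num_mul_le].
Qed.

Definition lsum {A : Type} (f : A -> R) (l : list A) : R :=
  fold_right (fun x acc => f x + acc) 0 l.

Section ListSums.

Context {A : Type}.
Implicit Types (f g : A -> R) (l : list A).

Lemma lsum_cons f x l : lsum f (x :: l) = f x + lsum f l.
Proof. reflexivity. Qed.

Lemma lsum_app f l1 l2 : lsum f (l1 ++ l2) = lsum f l1 + lsum f l2.
Proof. induction l1 as [|x l1 IH]; simpl; [ring | rewrite IH; ring]. Qed.

Lemma lsum_ext f g l : (forall x, In x l -> f x = g x) -> lsum f l = lsum g l.
Proof.
  induction l as [|x l IH]; intros H; [reflexivity|].
  rewrite !lsum_cons, (H x (or_introl eq_refl)), IH; [reflexivity|].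
  intros y Hy. apply H. right. exact Hy.
Qed.

Lemma lsum_le f g l : (forall x, In x l -> f x <= g x) -> lsum f l <= lsum g l.
Proof.
  induction l as [|x l IH]; intros H; simpl; [lra|].
  apply Rplus_le_compat; [apply H; left; reflexivity|].
  apply IH. intros y Hy. apply H. right. exact Hy.
Qed.

Lemma lsum_nonneg f l : (forall x, In x l -> 0 <= f x) -> 0 <= lsum f l.
Proof.
  induction l as [|x l IH]; intros H; simpl; [lra|].
  apply Rplus_le_le_0_compat; [apply H; left; reflexivity|].
  apply IH. intros y Hy. apply H. right. exact Hy.
Qed.

Lemma lsum_filter_le f (p : A -> bool) l :
  (forall x, In x l -> 0 <= f x) -> lsum f (filter p l) <= lsum f l.
Proof.
  induction l as [|x l IH]; intros H; simpl; [lra|].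
  assert (Hx : 0 <= f x) by (apply H; left; reflexivity).
  assert (Hl := IH (fun y Hy => H y (or_intror Hy))).
  destruct (p x); rewrite ?lsum_cons; lra.
Qed.

Lemma lsum_plus f g l : lsum (fun x => f x + g x) l = lsum f l + lsum g l.
Proof. induction l as [|x l IH]; simpl; [ring | rewrite IH; ring]. Qed.

Lemma lsum_scal_l (c : R) f l : lsum (fun x => c * f x) l = c * lsum f l.
Proof. induction l as [|x l IH]; simpl; [ring | rewrite IH; ring]. Qed.

Lemma lsum_const (c : R) l : lsum (fun _ => c) l = INR (length l) * c.
Proof.
  induction l as [|x l IH]; [simpl; ring|].
  rewrite lsum_cons, IH. cbn [length]. rewrite S_INR. ring.
Qed.

End ListSums.

Lemma lsum_map {A B : Type} (f : B -> R) (h : A -> B) (l : list A) :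
  lsum f (map h l) = lsum (fun x => f (h x)) l.
Proof. induction l as [|x l IH]; simpl; [reflexivity | rewrite IH; reflexivity]. Qed.

Lemma lsum_flat_map {A B : Type} (f : B -> R) (h : A -> list B) (l : list A) :
  lsum f (flat_map h l) = lsum (fun x => lsum f (h x)) l.
Proof. induction l as [|x l IH]; simpl; [reflexivity | rewrite lsum_app, IH; reflexivity]. Qed.

Lemma lsum_telescope (f : nat -> R) (s len : nat) :
  lsum (fun i => f i - f (S i)) (seq s len) = f s - f (s + len)%nat.
Proof.
  revert s. induction len as [|len IH]; intros s; simpl.
  - rewrite Nat.add_0_r. ring.
  - rewrite IH. replace (S s + len)%nat with (s + S len)%nat by lia. ring.
Qed.

Lemma majorant_telescoping (n a b : nat) : (1 <= n)%nat -> (1 <= n + b - a)%nat ->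
  majorant n a b = 4 / INR n * (if b =? 1 then 1 else / INR (S n))
                   * (/ INR (n + b - a) - / INR (S (n + b - a))).
Proof.
  intros Hn Hm. unfold majorant, majorant_den.
  assert (0 < INR n) by (apply lt_0_INR; lia).
  assert (0 < INR (n + b - a)) by (apply lt_0_INR; lia).
  destruct (b =? 1); rewrite !mult_INR; simpl (INR 1); rewrite ?S_INR; field; lra.
Qed.

Lemma lsum_majorant_row (n a : nat) : (1 <= a <= n)%nat ->
  lsum (fun b => majorant n a b) (filter (fun b => a + b <=? n + 1) (seq 1 a))
  <= 4 / INR n * (/ INR (n + 1 - a) - / INR (n + 2 - a)) + 4 / (INR n * INR (S n)).
Proof.
  intros Ha.
  assert (Hn : 0 < INR n) by (apply lt_0_INR; lia).
  eapply Rle_trans.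
  { apply lsum_filter_le. intros b Hb. apply in_seq in Hb.
    apply Rlt_le, majorant_pos; lia. }
  destruct a as [|a]; [lia|].
  cbn [seq]. rewrite lsum_cons.
  apply Rplus_le_compat.
  - rewrite majorant_telescoping by lia. cbn [Nat.eqb].
    replace (n + 2 - S a)%nat with (S (n + 1 - S a)) by lia. right. ring.
  - set (f b := / INR (n + b - S a)).
    rewrite (lsum_ext _ (fun b => 4 / INR n * / INR (S n) * (f b - f (S b)))).
    2:{ intros b Hb. apply in_seq in Hb. unfold f.
        rewrite majorant_telescoping by lia.
        rewrite (proj2 (Nat.eqb_neq b 1)) by lia.
        replace (n + S b - S a)%nat with (S (n + b - S a)) by lia. reflexivity. }
    rewrite lsum_scal_l, lsum_telescope.
    assert (Hf2 : f 2%nat <= 1).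
    { unfold f. rewrite <- Rinv_1. apply Rinv_le_contravar; [lra|].
      apply (le_INR 1). lia. }
    assert (Hf : 0 <= f (2 + a)%nat).
    { apply Rlt_le, Rinv_0_lt_compat, lt_0_INR. lia. }
    assert (Hc : 0 < 4 / INR n * / INR (S n)).
    { apply Rmult_lt_0_compat; [apply Rdiv_lt_0_compat; lra |].
      apply Rinv_0_lt_compat, lt_0_INR. lia. }
    replace (4 / (INR n * INR (S n))) with (4 / INR n * / INR (S n) * 1)
      by (field; split; [apply not_0_INR; lia | lra]).
    apply Rmult_le_compat_l; lra.
Qed.

Lemma lsum_majorant_le (n : nat) : (1 <= n)%nat ->
  lsum (fun p => majorant n (fst p) (snd p)) (A_set n) <= 8 / INR n.
Proof.
  intros Hn1.
  assert (Hn : 0 < INR n) by (apply lt_0_INR; lia).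
  assert (HSn : INR (S n) = INR n + 1) by apply S_INR.
  unfold A_set. rewrite lsum_flat_map.
  eapply Rle_trans.
  { apply (lsum_le _ (fun a => 4 / INR n * (/ INR (n + 1 - a) - / INR (n + 2 - a))
                               + 4 / (INR n * INR (S n)))).
    intros a Ha. apply in_seq in Ha.
    rewrite lsum_map. cbn [fst snd]. apply lsum_majorant_row. lia. }
  rewrite lsum_plus, lsum_scal_l, lsum_const, length_seq.
  set (f a := - / INR (n + 2 - a)).
  rewrite (lsum_ext _ (fun a => f a - f (S a))).
  2:{ intros a _. unfold f. rewrite Nat.sub_succ_r.
      replace (Nat.pred (n + 2 - a)) with (n + 1 - a)%nat by lia. ring. }
  rewrite lsum_telescope. unfold f.
  replace (n + 2 - 1)%nat with (S n) by lia. replace (n + 2 - (1 + n))%nat with 1%nat by lia.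
  rewrite HSn. simpl (INR 1).
  replace (4 / INR n * (- / (INR n + 1) - - / 1) + INR n * (4 / (INR n * (INR n + 1))))
    with (8 / (INR n + 1)) by (field; lra).
  apply Rmult_le_compat_l; [lra|]. apply Rinv_le_contravar; lra.
Qed.

Lemma sum_abs_r_le (n : nat) : (1 <= n)%nat -> sum_abs_r n <= 8 / INR n.
Proof.
  intros Hn. eapply Rle_trans; [|apply lsum_majorant_le, Hn].
  apply lsum_le. intros [a b] Hin. apply abs_r_n_le_majorant, Hin.
Qed.

Lemma is_lim_seq_ln_div_INR : is_lim_seq (fun n => ln (INR n) / INR n) 0.
Proof.
  apply (is_lim_comp_seq (fun y => ln y / y) INR p_infty 0).
  - exact is_lim_div_ln_p.
  - exists 0%nat. intros n _. discriminate.
  - exact is_lim_seq_INR.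
Qed.

Theorem mainTheorem18 :
  Un_cv (fun n : nat => ln (INR n) * sum_abs_r n) 0.
Proof.
  apply is_lim_seq_Reals.
  apply is_lim_seq_le_le_loc with (u := fun _ => 0) (w := fun n => 8 * (ln (INR n) / INR n)).
  - exists 1%nat. intros n Hn.
    assert (Hln : 0 <= ln (INR n)).
    { rewrite <- ln_1. apply ln_le; [lra | apply (le_INR 1), Hn]. }
    assert (Hsum : 0 <= sum_abs_r n) by (apply lsum_nonneg; intros; apply Rabs_pos).
    split; [apply Rmult_le_pos; assumption|].
    replace (8 * (ln (INR n) / INR n)) with (ln (INR n) * (8 / INR n)) by (unfold Rdiv; ring).
    apply Rmult_le_compat_l; [assumption | apply sum_abs_r_le, Hn].
  - apply is_lim_seq_const.
  - replace (Finite 0) with (Rbar_mult 8 0) by (simpl; f_equal; ring).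
    apply is_lim_seq_scal_l, is_lim_seq_ln_div_INR.
Qed.
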